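(* Let $n\ge3$. In $\mathrm{YTL}_{d,n}(u)$ we have (1) $(t_i-t_j)(t_i-t_k)(t_j-t_k)=0$ for all $1\le i,j,k\le n$; and (2) $(t_j-t_i)(t_j-t_{i+1})(g_i+1)=0$ for all $1\le i\le n-1$ and $1\le j\le n$.
   Context: Let $d,n\ge1$ be integers and $u$ an indeterminate. The Yokonuma–Hecke algebra $\mathrm{Y}_{d,n}(u)$ is the associative $\mathbb{C}[u,u^{-1}]$-algebra generated by $g_1,\dots,g_{n-1},t_1,\dots,t_n$ subject to: $g_ig_j=g_jg_i$ for $|i-j|>1$; $g_ig_{i+1}g_i=g_{i+1}g_ig_{i+1}$ for $1\le i\le n-2$; $t_it_j=t_jt_i$ for all $i,j$; $t_jg_i=g_it_{s_i(j)}$ for all $i,j$, where $s_i$ is the transposition $(i,i+1)$; $t_j^d=1$ for all $j$; and $g_i^2=1+(u-1)e_i+(u-1)e_ig_i$, where $e_i=\frac1d\sum_{s=0}^{d-1}t_i^st_{i+1}^{-s}$. For $n\ge3$, the Yokonuma–Temperley–Lieb algebra $\mathrm{YTL}_{d,n}(u)$ is the quotient of $\mathrm{Y}_{d,n}(u)$ by the two-sided ideal generated by the elements $g_ig_{i+1}g_i+g_ig_{i+1}+g_{i+1}g_i+g_i+g_{i+1}+1$, $1\le i\le n-2$; images of the generators in the quotient are denoted by the same letters. *)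

From HB Require Import structures.
From mathcomp Require Import all_boot all_order all_algebra.
Set Implicit Arguments. Unset Strict Implicit. Unset Printing Implicit Defensive.
Import Order.TTheory GRing.Theory Num.Theory.
Local Open Scope ring_scope.

Definition swp (i j : nat) : nat :=
  if j == i then i.+1 else if j == i.+1 then i else j.

Definition ytl_e (F : fieldType) (A : unitAlgType F) (d : nat)
  (t : nat -> A) (i : nat) : A :=
  (d%:R^-1 : F) *: \sum_(s < d) (t i ^+ s * t i.+1 ^- s).

(* The elements g_1..g_{n-1}, t_1..t_n of A (indices outside these
   ranges are ignored) satisfy the defining relations of Y_{d,n}(u)
   together with the extra YTL relations, u being a central unit of A. *)
Definition YTL_rels (F : fieldType) (A : unitAlgType F) (d n : nat)
  (u : A) (g t : nat -> A) : Prop :=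
  (u \is a GRing.unit /\ (forall x : A, u * x = x * u)) /\
      (forall i j, (1 <= i <= n.-1)%N -> (1 <= j <= n.-1)%N -> ((i.+1 < j) || (j.+1 < i))%N ->
          g i * g j = g j * g i) /\
      (forall i, (1 <= i <= n - 2)%N -> g i * g i.+1 * g i = g i.+1 * g i * g i.+1) /\
      (forall i j, (1 <= i <= n)%N -> (1 <= j <= n)%N -> t i * t j = t j * t i) /\
      (forall i j, (1 <= i <= n.-1)%N -> (1 <= j <= n)%N -> t j * g i = g i * t (swp i j)) /\
      (forall j, (1 <= j <= n)%N -> t j ^+ d = 1) /\
      (forall i, (1 <= i <= n.-1)%N -> g i ^+ 2 =
          1 + (u - 1) * ytl_e d t i + (u - 1) * ytl_e d t i * g i) /\
      (forall i, (1 <= i <= n - 2)%N ->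
          g i * g i.+1 * g i + g i * g i.+1 + g i.+1 * g i + g i + g i.+1 + 1 = 0).

From HB Require Import structures.
From mathcomp Require Import all_boot all_order all_algebra.
From mathcomp Require Import zify.
Import GRing.Theory.
Local Open Scope ring_scope.
Set Implicit Arguments. Unset Strict Implicit.

(* Say that g carries x to x' when x g = g x'.  The relation
   t_j g_i = g_i t_{s_i(j)} says that g_m carries a product of differences
   of t's to the same product with indices permuted by s_m.  Each g_m is a
   left non-zero-divisor: e_m is an idempotent (the average of the powers of
   t_m t_{m+1}^-1), so the quadratic relation forces Q = 0 from g_m Q = 0.
   Hence vanishing of such products is transported along the generators.

   Finally these base cases at consecutive strands are propagated: (1) for
   sorted triples by moving the last two indices upwards, then for all
   triples since the product is alternating; (2) by moving j away from i. *)

Section Intertwining.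
Variable R : pzRingType.
Implicit Types g h p q w x y z : R.

Lemma carry_sub g x x' y y' :
  x * g = g * x' -> y * g = g * y' -> (x - y) * g = g * (x' - y').
Proof. by rewrite mulrBl mulrBr => -> ->. Qed.

Lemma carry_mul g x x' y y' :
  x * g = g * x' -> y * g = g * y' -> (x * y) * g = g * (x' * y').
Proof. by move=> hx hy; rewrite -mulrA hy mulrA hx mulrA. Qed.

Lemma carry_comp g h x x' x'' :
  x * g = g * x' -> x' * h = h * x'' -> x * (g * h) = (g * h) * x''.
Proof. by move=> hg hh; rewrite mulrA hg -mulrA hh mulrA. Qed.

Lemma commr_diff x y z w :
  GRing.comm x z -> GRing.comm x w -> GRing.comm y z -> GRing.comm y w ->
  GRing.comm (x - y) (z - w).
Proof.
by move=> xz xw yz yw; apply: commrB; apply/commr_sym/commrB; apply/commr_sym.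
Qed.

Lemma carry_zero g x x' :
  x * g = g * x' -> (forall Q, g * Q = 0 -> Q = 0) -> x = 0 -> x' = 0.
Proof. by move=> hx gK x0; apply: gK; rewrite -hx x0 mul0r. Qed.

Definition skew y z p : R := y * p - p * z.

Lemma skewD y z p q : skew y z (p + q) = skew y z p + skew y z q.
Proof. by rewrite /skew mulrDr mulrDl opprD addrACA. Qed.

Lemma skew_carry y y' z w p :
  y * w = w * y' -> skew y z (w * p) = w * (y' * p - p * z).
Proof. by move=> h; rewrite /skew mulrA h -!mulrA -mulrBr. Qed.

Lemma skew_carry1 y y' z w : y * w = w * y' -> skew y z w = w * (y' - z).
Proof. by move=> h; rewrite /skew h mulrBr. Qed.

Lemma skew_comm y z p : GRing.comm y p -> skew y z p = p * (y - z).
Proof. by move=> hy; rewrite /skew hy mulrBr. Qed.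

End Intertwining.

Definition ytl_quadric (R : pzRingType) (g1 g2 : R) : R :=
  g1 * g2 * g1 + g1 * g2 + g2 * g1 + g1 + g2 + 1.

Lemma ytl_quadric_sym (R : pzRingType) (g1 g2 : R) :
  g1 * g2 * g1 = g2 * g1 * g2 -> ytl_quadric g1 g2 = ytl_quadric g2 g1.
Proof.
move=> braid; rewrite /ytl_quadric braid.
congr (_ + _); rewrite -!addrA; congr (_ + _).
by rewrite [g2 + g1]addrC addrCA.
Qed.

(* Three strands a, b, c acted on by g1 (swapping a, b) and g2 (swapping
   b, c), subject to the YTL relation. *)
Section ThreeStrands.
Variables (R : pzRingType) (a b c g1 g2 : R).
Hypotheses (a1 : a * g1 = g1 * b) (c1 : c * g1 = g1 * c).
Hypotheses (a2 : a * g2 = g2 * a) (b2 : b * g2 = g2 * c).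
Hypotheses (ab : GRing.comm a b) (bc : GRing.comm b c).
Hypothesis quadric0 : ytl_quadric g1 g2 = 0.

(* Sandwiching the relation by a|b and then a|c leaves only two terms. *)
Lemma strand_key : g2 * ((a - b) * (a - c)) + (a - b) * (a - c) = 0.
Proof.
have w12 : a * (g1 * g2) = (g1 * g2) * c := carry_comp a1 b2.
have w21 : a * (g2 * g1) = (g2 * g1) * b := carry_comp a2 a1.
have w121 : a * (g1 * g2 * g1) = (g1 * g2 * g1) * c := carry_comp w12 c1.
have sandwich_ab : skew a b (ytl_quadric g1 g2) =
    g1 * g2 * g1 * (c - b) + g1 * g2 * (c - b) + g2 * (a - b) + (a - b).
  rewrite /ytl_quadric !skewD (skew_carry1 _ w121) (skew_carry1 _ w12).
  rewrite (skew_carry1 _ w21) (skew_carry1 _ a1) (skew_carry1 _ a2).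
  by rewrite /skew mulr1 mul1r !subrr !mulr0 !addr0.
have cb_c : GRing.comm c (c - b) by apply: commrB; [|apply: commr_sym].
have ab_a : GRing.comm a (a - b) by apply: commrB.
have : skew a c (skew a b (ytl_quadric g1 g2)) = 0.
  by rewrite quadric0 /skew !(mulr0, mul0r, subrr).
rewrite sandwich_ab skewD [skew a c (a - b)]skew_comm // !skewD.
rewrite (skew_carry _ _ w121) (skew_carry _ _ w12) (skew_carry _ _ a2).
by rewrite cb_c ab_a subrr !mulr0 !add0r -mulrBr.
Qed.

End ThreeStrands.

Lemma strand_vdm (R : pzRingType) (a b c g : R) :
  b * g = g * c -> GRing.comm a b -> GRing.comm a c -> GRing.comm b c ->
  g * ((a - b) * (a - c)) + (a - b) * (a - c) = 0 ->
  (a - b) * (a - c) * (b - c) = 0.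
Proof.
move=> bg ab ac bc key.
have Xb : GRing.comm b ((a - b) * (a - c)).
  by apply: commrM; apply: commrB; rewrite ?commr_sym.
have Xc : GRing.comm c ((a - b) * (a - c)).
  by apply: commrM; apply: commrB; rewrite ?commr_sym.
have := congr1 (skew b c) key.
rewrite skewD (skew_carry _ _ bg) (skew_comm _ Xb) Xc subrr mulr0 add0r.
by rewrite /skew mulr0 mul0r subrr.
Qed.

Lemma strand_annih (R : pzRingType) (a b c g : R) :
  a * g = g * a -> b * g = g * c -> c * g = g * b ->
  GRing.comm a b -> GRing.comm a c -> GRing.comm b c ->
  g * ((a - b) * (a - c)) + (a - b) * (a - c) = 0 ->
  (a - b) * (a - c) * (g + 1) = 0.
Proof.
move=> ag bg cg ab ac bc key.
rewrite mulrDr mulr1 (carry_mul (carry_sub ag bg) (carry_sub ag cg)).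
by rewrite (commr_diff (commr_refl a) ab (commr_sym ac) (commr_sym bc)).
Qed.

Definition vdm3 (R : pzRingType) (x y z : R) : R := (x - y) * (x - z) * (y - z).

Lemma vdm3_swap12 (R : pzRingType) (x y z : R) :
  GRing.comm x y -> GRing.comm x z -> GRing.comm y z ->
  vdm3 y x z = - vdm3 x y z.
Proof.
move=> xy xz yz; rewrite /vdm3 -[y - x]opprB !mulNr -!mulrA.
by rewrite (commr_diff (commr_sym xy) yz (commr_sym xz) (commr_refl z)).
Qed.

Lemma vdm3_swap23 (R : pzRingType) (x y z : R) :
  GRing.comm x y -> GRing.comm x z -> GRing.comm y z ->
  vdm3 x z y = - vdm3 x y z.
Proof.
move=> xy xz yz; rewrite /vdm3 -[z - y]opprB mulrN.
by rewrite (commr_diff (commr_refl x) xy (commr_sym xz) (commr_sym yz)).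
Qed.

Lemma interval_ind (P : nat -> Prop) (lo hi : nat) :
  (lo <= hi)%N -> P lo -> (forall k, (lo <= k < hi)%N -> P k -> P k.+1) -> P hi.
Proof.
move=> le_lo_hi Plo step; rewrite -(subnKC le_lo_hi).
have : (lo + (hi - lo) <= hi)%N by rewrite subnKC.
elim: (hi - lo)%N => [|p IH] le_p; first by rewrite addn0.
by rewrite addnS; apply: step; [lia | apply: IH; lia].
Qed.

Lemma interval_ind_down (P : nat -> Prop) (lo hi : nat) :
  (lo <= hi)%N -> P hi -> (forall k, (lo <= k < hi)%N -> P k.+1 -> P k) -> P lo.
Proof.
move=> le_lo_hi Phi step.
have := @interval_ind (fun p => P (hi - p)%N) 0 (hi - lo) (leq0n _).
rewrite subn0 subKn // => /(_ Phi); apply=> p hp.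
have -> : (hi - p = (hi - p.+1).+1)%N by lia.
by apply: step; lia.
Qed.

Section QuadraticCancel.
Variables (F : fieldType) (A : unitAlgType F).

Definition pow_average (d : nat) (x : A) : A := (d%:R^-1 : F) *: \sum_(s < d) x ^+ s.

Lemma pow_average_idem d (x : A) :
  d%:R != 0 :> F -> x ^+ d = 1 -> pow_average d x * pow_average d x = pow_average d x.
Proof.
move=> dn0 xd; set e := pow_average d x.
have x_sum : x * \sum_(s < d) x ^+ s = \sum_(s < d) x ^+ s.
  apply/eqP; rewrite -subr_eq0 -[X in _ - X]mul1r -mulrBl.
  by rewrite -subrX1 xd subrr.
have xs_e s : x ^+ s * e = e.
  elim: s => [|s IH]; first by rewrite mul1r.
  by rewrite exprSr -mulrA /e /pow_average -scalerAr x_sum IH.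
rewrite {1}/e /pow_average -scalerAl mulr_suml.
under eq_bigr => s _ do rewrite xs_e.
by rewrite sumr_const card_ord -scaler_nat scalerA mulVf // scale1r.
Qed.

Lemma ytl_eE d (t : nat -> A) i :
  GRing.comm (t i) (t i.+1) -> ytl_e d t i = pow_average d (t i * (t i.+1)^-1).
Proof.
move=> titj; rewrite /ytl_e /pow_average; congr (_ *: _).
by apply: eq_bigr => s _; rewrite exprMn_comm ?exprVn //; apply: commrV.
Qed.

Lemma quadratic_cancel (u e g : A) :
  u \is a GRing.unit -> GRing.comm u e -> e * e = e ->
  g ^+ 2 = 1 + (u - 1) * e + (u - 1) * e * g ->
  forall Q, g * Q = 0 -> Q = 0.
Proof.
move=> uU ue ee gq Q gQ.
have g2Q : Q + (u - 1) * (e * Q) = 0.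
  have : g ^+ 2 * Q = 0 by rewrite expr2 -mulrA gQ mulr0.
  by rewrite gq mulrDl mulrDl mul1r -!mulrA gQ !mulr0 addr0.
have eQ : e * Q = 0.
  have eu : e * (u - 1) = (u - 1) * e by rewrite mulrBr mulrBl mulr1 mul1r ue.
  have : e * (Q + (u - 1) * (e * Q)) = 0 by rewrite g2Q mulr0.
  rewrite mulrDr mulrA eu -mulrA [e * (e * Q)]mulrA ee.
  rewrite -{1}(mul1r (e * Q)) -mulrDl addrC subrK.
  by move/(congr1 (fun y => u^-1 * y)); rewrite mulKr // mulr0.
by move: g2Q; rewrite eQ mulr0 addr0.
Qed.

End QuadraticCancel.

Lemma swp_self m : swp m m = m.+1.
Proof. by rewrite /swp eqxx. Qed.

Lemma swp_succ m : swp m m.+1 = m.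
Proof. by rewrite /swp eqxx; case: eqP => // /n_Sn. Qed.

Lemma swp_other m j : j != m -> j != m.+1 -> swp m j = j.
Proof. by rewrite /swp => /negbTE -> /negbTE ->. Qed.

Section YTLVanishing.
Variables (R : pzRingType) (n : nat) (g t : nat -> R).
Hypothesis t_comm : forall i j, (1 <= i <= n)%N -> (1 <= j <= n)%N ->
  t i * t j = t j * t i.
Hypothesis t_carry : forall i j, (1 <= i <= n.-1)%N -> (1 <= j <= n)%N ->
  t j * g i = g i * t (swp i j).
Hypothesis g_far : forall i j, (1 <= i <= n.-1)%N -> (1 <= j <= n.-1)%N ->
  ((i.+1 < j) || (j.+1 < i))%N -> g i * g j = g j * g i.
Hypothesis g_braid : forall i, (1 <= i <= n - 2)%N ->
  g i * g i.+1 * g i = g i.+1 * g i * g i.+1.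
Hypothesis g_quadric : forall i, (1 <= i <= n - 2)%N ->
  ytl_quadric (g i) (g i.+1) = 0.
Hypothesis g_cancel : forall i, (1 <= i <= n.-1)%N -> forall Q, g i * Q = 0 -> Q = 0.

Local Notation vdm i j k := (vdm3 (t i) (t j) (t k)).
Local Notation annih j i := ((t j - t i) * (t j - t i.+1) * (g i + 1)).

Lemma zero_carry m x y : (1 <= m <= n.-1)%N -> x * g m = g m * y -> x = 0 -> y = 0.
Proof. by move=> hm hxy; apply: carry_zero hxy (g_cancel hm). Qed.

Let t_commr i j : (1 <= i <= n)%N -> (1 <= j <= n)%N -> GRing.comm (t i) (t j).
Proof. exact: t_comm. Qed.

Section Consecutive.
Variable m : nat.
Hypothesis hm : (1 <= m <= n - 2)%N.

Let range : [/\ (1 <= m <= n)%N, (1 <= m.+1 <= n)%N & (1 <= m.+2 <= n)%N].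
Proof. by split; lia. Qed.

Let consecutive_comm :
  [/\ GRing.comm (t m) (t m.+1), GRing.comm (t m) (t m.+2) & GRing.comm (t m.+1) (t m.+2)].
Proof. by case: range => m0 m1 m2; split; apply: t_commr. Qed.

Let carry_first :
  [/\ t m * g m = g m * t m.+1, t m.+1 * g m = g m * t m & t m.+2 * g m = g m * t m.+2].
Proof.
have [m0 m1 m2] := range; have hg : (1 <= m <= n.-1)%N by lia.
split; rewrite t_carry // ?swp_self ?swp_succ // swp_other //; lia.
Qed.

Let carry_second : [/\ t m * g m.+1 = g m.+1 * t m,
  t m.+1 * g m.+1 = g m.+1 * t m.+2 & t m.+2 * g m.+1 = g m.+1 * t m.+1].
Proof.
have [m0 m1 m2] := range; have hg : (1 <= m.+1 <= n.-1)%N by lia.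
split; rewrite t_carry // ?swp_self ?swp_succ // swp_other //; lia.
Qed.

(* The three-strand identity and its mirror image under the braid relation. *)
Lemma consecutive_keys :
  g m.+1 * ((t m - t m.+1) * (t m - t m.+2)) + (t m - t m.+1) * (t m - t m.+2) = 0 /\
  g m * ((t m.+2 - t m) * (t m.+2 - t m.+1)) + (t m.+2 - t m) * (t m.+2 - t m.+1) = 0.
Proof.
have [ab ac bc] := consecutive_comm.
have [a1 b1 c1] := carry_first; have [a2 b2 c2] := carry_second.
split; first exact: strand_key a1 c1 a2 b2 ab bc (g_quadric hm).
have := strand_key c2 a2 c1 b1 (commr_sym bc) (commr_sym ab).
rewrite -ytl_quadric_sym ?g_braid // => /(_ (g_quadric hm)).
by rewrite (commr_diff (commr_refl _) (commr_sym bc) ac ab).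
Qed.

Lemma vdm_consecutive : vdm m m.+1 m.+2 = 0.
Proof.
have [ab ac bc] := consecutive_comm; have [_ b2 _] := carry_second.
by apply: strand_vdm b2 ab ac bc _; case: consecutive_keys.
Qed.

Lemma annih_consecutive_below : annih m m.+1 = 0.
Proof.
have [ab ac bc] := consecutive_comm; have [a2 b2 c2] := carry_second.
by apply: strand_annih a2 b2 c2 ab ac bc _; case: consecutive_keys.
Qed.

Lemma annih_consecutive_above : annih m.+2 m = 0.
Proof.
have [ab ac bc] := consecutive_comm; have [a1 b1 c1] := carry_first.
apply: strand_annih c1 a1 b1 (commr_sym ac) (commr_sym bc) ab _.
by case: consecutive_keys.
Qed.

End Consecutive.

Lemma vdm_carry m i j k : (1 <= m <= n.-1)%N ->
  (1 <= i <= n)%N -> (1 <= j <= n)%N -> (1 <= k <= n)%N ->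
  vdm i j k * g m = g m * vdm (swp m i) (swp m j) (swp m k).
Proof.
move=> hm hi hj hk.
by apply: carry_mul; first apply: carry_mul; apply: carry_sub; apply: t_carry.
Qed.

(* Sorted triples: first move k up from i+2, then j up from i+1. *)
Lemma vdm_sorted i j k : (1 <= i)%N -> (i < j < k)%N -> (k <= n)%N -> vdm i j k = 0.
Proof.
move=> hi hijk hkn.
have third : vdm i i.+1 k = 0.
  apply: (@interval_ind (fun k => vdm i i.+1 k = 0) i.+2) => [|| l hl]; first lia.
    by apply: vdm_consecutive; lia.
  move/(zero_carry (m := l)); apply; first lia.
  by rewrite vdm_carry ?swp_self ?(@swp_other l) //; lia.
apply: (@interval_ind (fun j => vdm i j k = 0) i.+1) => // [|l hl]; first lia.
move/(zero_carry (m := l)); apply; first lia.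
by rewrite vdm_carry ?swp_self ?(@swp_other l) //; lia.
Qed.

(* Part (1): sort the indices using that the product is alternating. *)
Lemma vdm_vanish i j k : (1 <= i <= n)%N -> (1 <= j <= n)%N -> (1 <= k <= n)%N ->
  vdm i j k = 0.
Proof.
have swap12 i' j' k' : (1 <= i' <= n)%N -> (1 <= j' <= n)%N -> (1 <= k' <= n)%N ->
    vdm j' i' k' = 0 -> vdm i' j' k' = 0.
  move=> hi hj hk.
  rewrite (vdm3_swap12 (t_commr hi hj) (t_commr hi hk) (t_commr hj hk)) => /eqP.
  by rewrite oppr_eq0 => /eqP.
have swap23 i' j' k' : (1 <= i' <= n)%N -> (1 <= j' <= n)%N -> (1 <= k' <= n)%N ->
    vdm i' k' j' = 0 -> vdm i' j' k' = 0.
  move=> hi hj hk.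
  rewrite (vdm3_swap23 (t_commr hi hj) (t_commr hi hk) (t_commr hj hk)) => /eqP.
  by rewrite oppr_eq0 => /eqP.
wlog hij : i j k / (i <= j)%N => [sorted12 hi hj hk|].
  by case: (leqP i j) => [|/ltnW] ?; [|apply: swap12 => //]; apply: sorted12.
wlog hjk : i j k hij / (j <= k)%N => [sorted23 hi hj hk|].
  case: (leqP j k) => [hjk|/ltnW hkj]; first exact: sorted23.
  apply: swap23 => //; case: (leqP i k) => [|/ltnW] hik; first exact: sorted23.
  by apply: swap12 => //; apply: sorted23.
move=> hi hj hk.
case: (ltngtP i j) hij => // [hlt|->] _; last by rewrite /vdm3 subrr !mul0r.
case: (ltngtP j k) hjk => // [hlt'|->] _; last by rewrite /vdm3 subrr mulr0.
by apply: vdm_sorted; lia.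
Qed.

Lemma annih_carry m i j : (1 <= m <= n.-1)%N -> (1 <= i <= n.-1)%N ->
  ((i.+1 < m) || (m.+1 < i))%N -> (1 <= j <= n)%N ->
  annih j i * g m = g m * annih (swp m j) i.
Proof.
move=> hm hi far hj.
have gim : (g i + 1) * g m = g m * (g i + 1).
  by rewrite mulrDl mulrDr mul1r mulr1 g_far.
have fix_i : swp m i = i by rewrite swp_other //; lia.
have fix_i1 : swp m i.+1 = i.+1 by rewrite swp_other //; lia.
apply: carry_mul gim; apply: carry_mul; apply: carry_sub;
  by rewrite t_carry ?fix_i ?fix_i1 //; lia.
Qed.

(* Part (2): move j away from i, starting from the consecutive cases. *)
Lemma annih_vanish i j : (1 <= i <= n.-1)%N -> (1 <= j <= n)%N -> annih j i = 0.
Proof.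
move=> hi hj.
have [j_lt|[->|[->|j_gt]]] : (j < i \/ j = i \/ j = i.+1 \/ i.+1 < j)%N by lia.
- case: i hi j_lt => [|i] hi j_lt; first lia.
  apply: (@interval_ind_down (fun j => annih j i.+1 = 0) j i); first lia.
    by apply: annih_consecutive_below; lia.
  move=> l hl; move/(zero_carry (m := l)); apply; first lia.
  by rewrite annih_carry ?swp_succ //; lia.
- by rewrite subrr !mul0r.
- by rewrite subrr mulr0 mul0r.
- apply: (@interval_ind (fun j => annih j i = 0) i.+2); first lia.
    by apply: annih_consecutive_above; lia.
  move=> l hl; move/(zero_carry (m := l)); apply; first lia.
  by rewrite annih_carry ?swp_self //; lia.
Qed.

End YTLVanishing.

Theorem mainTheorem13 (F : fieldType) (charF0 : [pchar F] =i pred0)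
  (d n : nat) (hd : (1 <= d)%N) (hn : (3 <= n)%N)
  (A : unitAlgType F) (u : A) (g t : nat -> A) :
  YTL_rels d n u g t ->
  (forall i j k : nat, (1 <= i <= n)%N -> (1 <= j <= n)%N -> (1 <= k <= n)%N ->
     (t i - t j) * (t i - t k) * (t j - t k) = 0) /\
  (forall i j : nat, (1 <= i <= n.-1)%N -> (1 <= j <= n)%N ->
     (t j - t i) * (t j - t i.+1) * (g i + 1) = 0).
Proof.
move=> [[uU uC] [g_far [g_braid [t_comm [t_carry [t_ord [g_sq g_quadric]]]]]]].
have dn0 : d%:R != 0 :> F by move/pcharf0P: charF0 => ->; rewrite -lt0n.
have g_cancel i : (1 <= i <= n.-1)%N -> forall Q, g i * Q = 0 -> Q = 0.
  move=> hi; apply: quadratic_cancel uU (uC _) _ (g_sq i hi).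
  have tii1 : GRing.comm (t i) (t i.+1) by apply: t_comm; lia.
  rewrite ytl_eE //; apply: pow_average_idem => //.
  have [ti ti1] : t i ^+ d = 1 /\ t i.+1 ^+ d = 1 by split; apply: t_ord; lia.
  by rewrite exprMn_comm ?exprVn ?ti ?ti1 ?invr1 ?mulr1 //; apply: commrV.
split.
- exact: vdm_vanish t_comm t_carry g_braid g_quadric g_cancel.
- exact: annih_vanish t_comm t_carry g_far g_braid g_quadric g_cancel.
Qed.
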